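(* Let $q$ be a prime power, let $G$ be the incidence graph of a projective plane of order $q$, let $e_0=v_0v_1$ be an edge of $G$, and let $\hat G$ be the graph obtained from two disjoint copies $G^{(1)},G^{(2)}$ of $G$ by deleting the two copies of $e_0$ and adding the edges $v_0^{(1)}v_1^{(2)}$ and $v_0^{(2)}v_1^{(1)}$. Then $\sqrt{q-1}-1<R(\hat G)<\sqrt{q}-1$, and the real number $R(\hat G)$ is a root of $\lambda^3+(1-q)\lambda^2-3q\lambda+q^2-q$ lying in this interval.
   Context: For a graph $H$ of order $n$ with adjacency eigenvalues $\lambda_1\geqslant\cdots\geqslant\lambda_n$, the HL-index is $R(H)=\max\{|\lambda_{\lfloor (n+1)/2\rfloor}|,\ |\lambda_{\lceil (n+1)/2\rceil}|\}$. The incidence graph of a projective plane is the bipartite graph whose two parts are the points and the lines, a point being adjacent to a line iff it lies on it; for order $q$ it is $(q+1)$-regular with $2(q^2+q+1)$ vertices. *)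

From HB Require Import structures.
From mathcomp Require Import all_boot all_order all_algebra all_field.
Set Implicit Arguments. Unset Strict Implicit. Unset Printing Implicit Defensive.
Import Order.TTheory GRing.Theory Num.Theory.
Local Open Scope ring_scope.

Definition adj_mx (V : finType) (e : rel V) : 'M[algC]_#|V| :=
  \matrix_(i, j) (e (enum_val i) (enum_val j))%:R.

(* The eigenvalues (with multiplicity) of A, listed in non-increasing order
   (by real part; eigenvalues of symmetric real matrices are real). *)
Definition eigenvalues n (A : 'M[algC]_n) : seq algC :=
  sort (fun x y : algC => 'Re y <= 'Re x)
       (projT1 (closed_field_poly_normal (char_poly A))).

(* HL-index: max(|lambda_{floor((n+1)/2)}|, |lambda_{ceil((n+1)/2)}|),
   eigenvalues 1-indexed in non-increasing order. *)
Definition HL_index n (A : 'M[algC]_n) : algC :=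
  let s := eigenvalues A in
  Num.max `|s`_((n.+1 %/ 2)%N.-1)| `|s`_((n.+2 %/ 2)%N.-1)|.

Definition proj_plane (q : nat) (P L : finType) (inc : P -> L -> bool) : Prop :=
  [/\ (forall p p' : P, p != p' -> #|[set l | inc p l && inc p' l]| = 1%N),
      (forall l l' : L, l != l' -> #|[set p | inc p l && inc p l']| = 1%N),
      (forall l : L, #|[set p | inc p l]| = q.+1) &
      (forall p : P, #|[set l | inc p l]| = q.+1)].

(* Vertices of G-hat: (copy, vertex of incidence graph); copies indexed by bool. *)
Definition hatV (P L : finType) := (bool * (P + L))%type.

(* G-hat: two copies of the incidence graph, each with the edge p0 l0 deleted,
   plus the edges p0^(c) l0^(~c). *)
Definition hatG (P L : finType) (inc : P -> L -> bool) (p0 : P) (l0 : L)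
    (x y : hatV P L) : bool :=
  let ed (c : bool) (p : P) (c' : bool) (l : L) :=
    if (p == p0) && (l == l0) then c != c' else (c == c') && inc p l in
  match x, y with
  | (c, inl p), (c', inr l) => ed c p c' l
  | (c, inr l), (c', inl p) => ed c' p c l
  | _, _ => false
  end.

(* A vertex of G^ is a pair (c, v), c : bool naming the copy.  For a function f
   on the vertices put f+ = f(true,_) + f(false,_) and f- = f(true,_) - f(false,_).
   If f is a z-eigenvector of G^, then f+ satisfies the bipartite eigen-equations
   of the incidence matrix N of the plane, and f- those of the signed incidence
   matrix N', which is N with the entry of e0 negated.  Squaring and using
   N N^T = qI + J gives z^2 = q or z^2 = (q+1)^2 when f+ <> 0; for N' N'^T the
   equation z^2 x = N' N'^T x collapses to a 3x3 linear system whose determinant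
   is a cubic in z^2, equal to -c(z) c(-z) with c(t) = t^3 + (1-q)t^2 - 3qt + q^2 - q.
   Conversely every nonzero root of c(z) c(-z) is an eigenvalue, via an explicit
   antisymmetric eigenvector.  Over a real closed field, c has a root r in
   (sqrt(q-1) - 1, sqrt q - 1) whose modulus is below that of any other real
   root; so +-r are eigenvalues of G^ and every eigenvalue has modulus >= r.
   G^ is bipartite, so its spectrum is symmetric, and the two middle terms of a
   sorted symmetric real spectrum without 0 are +-(least modulus): R(G^) = r. *)

From HB Require Import structures.
From mathcomp Require Import all_boot all_order all_algebra all_field.
From mathcomp Require Import ring lra.
Import Order.TTheory GRing.Theory Num.Theory.
Local Open Scope ring_scope.
Set Implicit Arguments. Unset Strict Implicit. Unset Printing Implicit Defensive.

Definition geRe (x y : algC) : bool := 'Re y <= 'Re x.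

Lemma geRe_real (x y : algC) : x \is Creal -> y \is Creal -> geRe x y = (y <= x).
Proof. by move=> /Creal_ReP xr /Creal_ReP yr; rewrite /geRe xr yr. Qed.

Lemma geRe_trans : transitive geRe.
Proof. by move=> y x z; rewrite /geRe => h1 h2; apply: le_trans h2 h1. Qed.

Lemma geRe_refl : reflexive geRe.
Proof. by move=> x; rewrite /geRe. Qed.

Lemma geRe_total : total geRe.
Proof. by move=> x y; rewrite /geRe; apply: real_leVge; apply: Creal_Re. Qed.

Lemma sorted_pos_prefix (s : seq algC) :
  {in s, forall z, z \is Creal} -> sorted geRe s ->
  forall i, (i < size s)%N -> (0 < s`_i) = (i < count (fun z => (0 < z)%R) s)%N.
Proof.
elim: s => [|a t IH] //= realS sortS i lti.
have ra : a \is Creal by apply: realS; rewrite mem_head.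
have realT : {in t, forall z, z \is Creal} by move=> z zt; apply: realS; rewrite inE zt orbT.
have leA : {in t, forall z, z <= a}.
  move=> z zt; have /allP tle := order_path_min geRe_trans sortS.
  by rewrite -(geRe_real ra (realT z zt)) tle.
have [a0|a0] := boolP (0 < a).
  case: i lti => [|i] //= lti; rewrite add1n ltnS.
  exact: IH realT (path_sorted sortS) i lti.
have noposT : count (fun z => 0 < z) t = 0%N.
  apply/eqP; rewrite -leqn0 leqNgt -has_count; apply/hasPn => z zt.
  by apply: contra a0 => z0; apply: lt_le_trans z0 (leA z zt).
rewrite noposT add0n ltn0; case: i lti => [|i] /= lti; first exact/negbTE.
apply/negbTE; apply: contra a0 => z0; apply: lt_le_trans z0 (leA _ _).
by rewrite mem_nth.
Qed.

Lemma count_pos_symmetric (t : seq algC) :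
  {in t, forall z, z \is Creal} -> 0 \notin t -> perm_eq (map -%R t) t ->
  size t = (count (fun z => 0 < z) t).*2.
Proof.
move=> realT t0 symT.
have cneg : count (fun z => z < 0) t = count (fun z => 0 < z) t.
  by rewrite -(permP symT) count_map; apply: eq_count => z /=; rewrite oppr_lt0.
rewrite -addnn -{2}cneg -(count_predC (fun z => 0 < z)); congr (_ + _)%N.
apply: eq_in_count => z zt /=.
have z0 : z != 0 by apply: contraNneq t0 => <-.
by case: (real_ltgt0P (realT z zt)) z0 => //; rewrite eqxx.
Qed.

Lemma sorted_symmetric_middle (t : seq algC) (r : algC) :
  sorted geRe t -> {in t, forall z, z \is Creal} -> perm_eq (map -%R t) t ->
  0 < r -> r \in t -> {in t, forall z, r <= `|z|} ->
  Num.max `|t`_((size t).+1 %/ 2).-1| `|t`_((size t).+2 %/ 2).-1| = r.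
Proof.
move=> sortT realT symT r0 rt rle.
have t0 : 0 \notin t by apply/negP => /rle; rewrite normr0 (lt_geF r0).
have sizeT := count_pos_symmetric realT t0 symT.
set k := count _ t in sizeT.
have -> : ((size t).+1 %/ 2).-1 = k.-1 by rewrite sizeT divn2 /= uphalf_double.
have -> : ((size t).+2 %/ 2).-1 = k by rewrite sizeT divn2 /= doubleK.
have prefix := sorted_pos_prefix realT sortT.
have mono i j : (i <= j < size t)%N -> t`_j <= t`_i.
  move=> /andP[ij jt]; have it := leq_ltn_trans ij jt.
  rewrite -geRe_real ?realT ?mem_nth //.
  by apply: (sorted_leq_nth geRe_trans geRe_refl 0 sortT); rewrite ?inE.
have [j jt tj] : exists2 j, (j < size t)%N & t`_j = r.
  by exists (index r t); rewrite ?nth_index ?index_mem.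
have [j' j't tj'] : exists2 j, (j < size t)%N & t`_j = - r.
  have nrt : - r \in t by rewrite -(perm_mem symT) map_f.
  by exists (index (- r) t); rewrite ?nth_index ?index_mem.
have jk : (j < k)%N by rewrite -prefix // tj.
have kj' : (k <= j')%N by rewrite leqNgt -prefix // tj' oppr_gt0 (lt_gtF r0).
have kt : (k < size t)%N by rewrite sizeT -addnn -addn1 leq_add2l (leq_ltn_trans _ jk).
have k1t : (k.-1 < size t)%N := leq_ltn_trans (leq_pred k) kt.
have pos : 0 < t`_k.-1 by rewrite prefix // prednK ?(leq_ltn_trans _ jk).
have neg : t`_k < 0.
  have tk0 : t`_k != 0 by apply: contraNneq t0 => <-; rewrite mem_nth.
  have := prefix k kt; rewrite ltnn.
  by case: (real_ltgt0P (realT _ (mem_nth 0 kt))) tk0; rewrite ?eqxx.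
have norm_km1 : `|t`_k.-1| = r.
  apply/le_anti; rewrite rle ?mem_nth // andbT gtr0_norm // -tj mono //.
  by rewrite k1t andbT -ltnS prednK ?(leq_ltn_trans _ jk).
have norm_k : `|t`_k| = r.
  apply/le_anti; rewrite rle ?mem_nth // andbT ltr0_norm // lerNl -tj' mono //.
  by rewrite kj'.
by rewrite norm_km1 norm_k maxxx.
Qed.

Lemma char_poly_eigenvalues n (A : 'M[algC]_n) :
  char_poly A = \prod_(z <- eigenvalues A) ('X - z%:P).
Proof.
rewrite /eigenvalues; case: closed_field_poly_normal => s /= hs.
rewrite {1}hs (monicP (char_poly_monic A)) scale1r.
by apply: perm_big; rewrite perm_sym perm_sort.
Qed.

Lemma size_eigenvalues n (A : 'M[algC]_n) : size (eigenvalues A) = n.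
Proof.
have := size_char_poly A; rewrite char_poly_eigenvalues size_prod_XsubC.
by case.
Qed.

Lemma mem_eigenvalues n (A : 'M[algC]_n) (z : algC) :
  (z \in eigenvalues A) = eigenvalue A z.
Proof. by rewrite eigenvalue_root_char char_poly_eigenvalues root_prod_XsubC. Qed.

Lemma HL_index_symmetric n (A : 'M[algC]_n) (r : algC) :
  let s := eigenvalues A in
  {in s, forall z, z \is Creal} -> perm_eq (map -%R s) s ->
  0 < r -> r \in s -> {in s, forall z, r <= `|z|} -> HL_index A = r.
Proof.
move=> s realS symS r0 rs rle.
have := sorted_symmetric_middle (sort_sorted geRe_total _) realS symS r0 rs rle.
by rewrite size_eigenvalues.
Qed.

(* A matrix vanishing on both blocks of a bipartition is similar to its
   opposite (conjugate by the diagonal +-1 matrix), so chi(-X) = (-1)^n chi(X). *)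
Lemma char_poly_bipartite n (A : 'M[algC]_n) (side : 'I_n -> bool) :
  (forall i j, side i = side j -> A i j = 0) ->
  char_poly A \Po (- 'X) = (-1) ^+ n * char_poly A.
Proof.
move=> hA.
pose D : 'M[{poly algC}]_n := diag_mx (\row_i (if side i then 1 else -1)).
have DD : D *m D = 1%:M.
  rewrite mulmx_diag; apply/matrixP => i j; rewrite !mxE.
  by case: (i == j); case: (side i); rewrite ?mulr1n ?mulr0n ?mulr1 ?mulrNN ?mulr1.
set C := char_poly_mx A.
have CN : map_mx (comp_poly (- 'X)) C = - (D *m C *m D).
  apply/matrixP => i j; rewrite /C /char_poly_mx /D [LHS]mxE [RHS]mxE.
  rewrite mul_mx_diag mul_diag_mx !mxE /=.
  have [->|nij] := eqVneq i j.
    by rewrite mulr1n hA // polyC0 subr0 comp_polyX; case: (side j); ring.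
  rewrite /= !mulr0n comp_polyB comp_poly0 comp_polyC !sub0r.
  case e1: (side i); case e2: (side j);
    try (rewrite hA ?e1 ?e2 // polyC0 oppr0 !mulr0 ?mul0r oppr0 //); ring.
rewrite /char_poly -/C -det_map_mx CN -scaleN1r detZ !det_mulmx.
by congr (_ * _); rewrite mulrC mulrA -det_mulmx DD det1 mul1r.
Qed.

Lemma prod_XsubC_compN (s : seq algC) :
  (\prod_(z <- s) ('X - z%:P)) \Po (- 'X) =
  (-1) ^+ size s * \prod_(z <- map -%R s) ('X - z%:P).
Proof.
elim: s => [|a s IH]; first by rewrite !big_nil comp_polyC expr0 mulr1.
rewrite /= !big_cons comp_polyM IH comp_polyB comp_polyX comp_polyC exprS polyCN.
ring.
Qed.

Lemma eigenvalues_bipartite n (A : 'M[algC]_n) (side : 'I_n -> bool) :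
  (forall i j, side i = side j -> A i j = 0) ->
  perm_eq (map -%R (eigenvalues A)) (eigenvalues A).
Proof.
move=> /char_poly_bipartite; rewrite char_poly_eigenvalues prod_XsubC_compN.
rewrite size_eigenvalues => /(congr1 ( *%R ((-1) ^+ n))).
rewrite !mulrA -exprMn mulrNN mulr1 expr1n !mul1r.
by move/prod_XsubC_eq.
Qed.

(* Eigenvalues of a hermitian matrix are real: z = (v A v^* ) / |v|^2. *)
Lemma hermitian_eigenvalue_real n (A : 'M[algC]_n) (z : algC) :
  (forall i j, A i j = (A j i)^*) -> eigenvalue A z -> z \is Creal.
Proof.
move=> hA /eigenvalueP [v hv vn0].
pose T := \sum_j (v *m A) 0 j * (v 0 j)^*.
pose N := \sum_j `|v 0 j| ^+ 2.
have TN : T = z * N.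
  rewrite /T /N mulr_sumr; apply: eq_bigr => j _.
  by rewrite hv mxE normCK mulrA.
have Treal : T^* = T.
  rewrite /T (eq_bigr (fun j => \sum_i v 0 i * A i j * (v 0 j)^*)); last first.
    by move=> j _; rewrite mxE mulr_suml.
  rewrite rmorph_sum /= exchange_big /=; apply: eq_bigr => i _.
  rewrite rmorph_sum /=; apply: eq_bigr => j _.
  by rewrite !rmorphM /= conjCK -hA; ring.
have Nreal : N^* = N.
  by apply/CrealP/ger0_real/sumr_ge0 => j _; apply: exprn_ge0.
have Nn0 : N != 0.
  apply: contra vn0 => /eqP/psumr_eq0P N0; apply/eqP/rowP => j; rewrite mxE.
  apply/eqP; rewrite -normr_eq0 -sqrf_eq0; apply/eqP/N0 => // k _.
  exact: exprn_ge0.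
have -> : z = T / N by rewrite TN mulfK.
by apply/CrealP; rewrite fmorph_div /= Treal Nreal.
Qed.

Definition hl_cubic (R : comNzRingType) (q t : R) : R :=
  t ^+ 3 + (1 - q) * t ^+ 2 - 3 * q * t + q ^+ 2 - q.

Lemma sqrt_gt1 (R : rcfType) (q : R) : 2 <= q -> 1 < Num.sqrt q /\ Num.sqrt q ^+ 2 = q.
Proof.
move=> q2; have sq : Num.sqrt q ^+ 2 = q by rewrite sqr_sqrtr //; lra.
by split=> //; have := sqrtr_ge0 q; nra.
Qed.

(* c is decreasing on [0, sqrt q), as c t - c u = (u - t) (3q + (q-1)(t+u) - ...). *)
Lemma hl_cubic_decreasing (R : rcfType) (q t u : R) : 2 <= q ->
  0 <= t -> t < u -> u < Num.sqrt q -> hl_cubic q u < hl_cubic q t.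
Proof.
move=> q2 t0 tu us; have [s1 sq] := sqrt_gt1 q2.
have diff : hl_cubic q t - hl_cubic q u =
    (u - t) * (3 * q + (q - 1) * (t + u) - (t ^+ 2 + t * u + u ^+ 2)).
  by rewrite /hl_cubic; ring.
have tu_q : t ^+ 2 + t * u + u ^+ 2 < 3 * q.
  have uu : u ^+ 2 < q by rewrite -sq; nra.
  have tt : t ^+ 2 < q by rewrite -sq; nra.
  have tu' : t * u < q by rewrite -sq; nra.
  lra.
have lin : 0 <= (q - 1) * (t + u) by apply: mulr_ge0; lra.
by rewrite -subr_gt0 diff; apply: mulr_gt0; lra.
Qed.

Lemma hl_cubic_neg_pos (R : rcfType) (q t : R) : 2 <= q ->
  1 - Num.sqrt q <= t -> t < 0 -> 0 < hl_cubic q t.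
Proof.
move=> q2 tb t0; have [s1 sq] := sqrt_gt1 q2; set s := Num.sqrt q in s1 sq tb *.
set w := - t; have w0 : 0 < w by rewrite /w; lra.
have wE : hl_cubic q t = q ^+ 2 - q - w ^+ 2 * (q - 1 + w) + 3 * q * w.
  by rewrite /hl_cubic /w; ring.
have w_le : w ^+ 2 * (q - 1 + w) <= (s - 1) ^+ 2 * (q - 1 + (s - 1)).
  have wb : w <= s - 1 by rewrite /w; lra.
  apply: ler_pM; rewrite ?sqr_ge0 ?ler_pXn2r ?nnegrE //; lra.
have b_lt : (s - 1) ^+ 2 * (q - 1 + (s - 1)) < q ^+ 2 - q by rewrite -sq; nra.
have qw : 0 < 3 * q * w by rewrite !mulr_gt0 //; lra.
by rewrite wE; lra.
Qed.

(* c(sqrt(q-1) - 1) = 2 > 0 > c(sqrt q - 1), so c has a root r in between; by the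
   two previous lemmas every other real root has modulus at least r. *)
Lemma hl_cubic_small_root (R : rcfType) (q : R) : 2 <= q ->
  exists r : R, [/\ 0 < r, Num.sqrt (q - 1) - 1 < r, r < Num.sqrt q - 1, hl_cubic q r = 0 &
    forall t, hl_cubic q t = 0 -> r <= `|t|].
Proof.
move=> q2; have [s1 sq] := sqrt_gt1 q2; set s := Num.sqrt q in s1 sq *.
have [s'1 sq'] : 1 <= Num.sqrt (q - 1) /\ Num.sqrt (q - 1) ^+ 2 = q - 1.
  have sq' : Num.sqrt (q - 1) ^+ 2 = q - 1 by rewrite sqr_sqrtr //; lra.
  by split=> //; have := sqrtr_ge0 (q - 1); nra.
set s' := Num.sqrt (q - 1) in s'1 sq' *.
have ca : hl_cubic q (s' - 1) = 2.
  have qE : q = s' ^+ 2 + 1 by rewrite sq'; ring.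
  by rewrite /hl_cubic qE; ring.
have cb : hl_cubic q (s - 1) = s - s ^+ 2 by rewrite /hl_cubic -sq; ring.
have ab : s' - 1 <= s - 1 by nra.
pose p : {poly R} := - ('X^3 + (1 - q) *: 'X^2 - (3 * q) *: 'X + (q ^+ 2 - q)%:P).
have pE t : p.[t] = - hl_cubic q t by rewrite /p /hl_cubic !hornerE /=; ring.
have [r /andP[ar rb]] : exists2 r, s' - 1 <= r <= s - 1 & root p r.
  by apply: poly_ivt; rewrite // !pE ca cb; apply/andP; split; nra.
rewrite /root pE oppr_eq0 => /eqP cr.
have ar' : s' - 1 < r.
  by rewrite lt_def ar andbT; apply/eqP => rE; move: cr; rewrite rE ca => ?; lra.
have rb' : r < s - 1.
  by rewrite lt_def rb andbT; apply/eqP => rE; move: cr; rewrite -rE cb => ?; nra.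
exists r; split=> [||||t ct] //; first lra.
have [rt|tr] := leP r t; first exact: le_trans rt (ler_norm t).
have [t0|t0] := leP 0 t.
  have rs : r < s by lra.
  by have := hl_cubic_decreasing q2 t0 tr rs; rewrite ct cr ltxx.
have [tb|tb] := leP (1 - s) t; first by have := hl_cubic_neg_pos q2 tb t0; rewrite ct ltxx.
by rewrite ltr0_norm //; lra.
Qed.

Lemma algRval_hl_cubic (q t : algR) :
  algRval (hl_cubic q t) = hl_cubic (algRval q) (algRval t).
Proof.
by rewrite /hl_cubic !(rmorphB, rmorphD, rmorphM, rmorphXn, rmorph_nat, rmorph1).
Qed.

Lemma algRval_sqrt (x : algR) : 0 <= x -> algRval (Num.sqrt x) = sqrtC (algRval x).
Proof.
move=> x0; have sqrt_ge0 : 0 <= algRval (Num.sqrt x) := sqrtr_ge0 x.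
apply/eqP; rewrite -(@eqrXn2 _ 2) ?sqrtC_ge0 //.
by rewrite sqrtCK -rmorphXn sqr_sqrtr.
Qed.

Lemma hl_cubic_small_rootC (q : nat) : (2 <= q)%N ->
  exists r : algC, [/\ 0 < r, sqrtC (q%:R - 1) - 1 < r, r < sqrtC q%:R - 1, hl_cubic q%:R r = 0 &
    {in Creal, forall t, hl_cubic q%:R t = 0 -> r <= `|t|}].
Proof.
move=> q2; have q2R : (2 : algR) <= q%:R by rewrite (ler_nat _ 2).
have [r [r0 ar rb cr rmin]] := hl_cubic_small_root q2R.
have valq : algRval q%:R = q%:R := rmorph_nat _ q.
have sqrt1 : algRval (Num.sqrt (q%:R - 1)) = sqrtC (q%:R - 1).
  by rewrite algRval_sqrt ?subr_ge0 ?ler1n 1?ltnW // rmorphB rmorph1 rmorph_nat.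
have sqrt0 : algRval (Num.sqrt q%:R) = sqrtC q%:R by rewrite algRval_sqrt ?rmorph_nat.
exists (algRval r); split; first exact: r0.
- by rewrite -sqrt1; exact: ar.
- by rewrite -sqrt0; exact: rb.
- by rewrite -valq -algRval_hl_cubic cr rmorph0.
- move=> t tr ct; pose tR := in_algR tr.
  suff : r <= `|tR| by [].
  apply: rmin; apply: val_inj; change (algRval (hl_cubic q%:R tR) = algRval 0).
  by rewrite algRval_hl_cubic valq ct.
Qed.

Section SumHelpers.
Variables (F : comNzRingType) (X : finType).

Lemma sum_delta_l (i0 : X) (f : X -> F) : \sum_i (i == i0)%:R * f i = f i0.
Proof.
rewrite (bigD1 i0) //= eqxx mul1r big1 ?addr0 // => i /negPf ->.
by rewrite mul0r.
Qed.

Lemma sum_delta_r (i0 : X) (f : X -> F) : \sum_i f i * (i == i0)%:R = f i0.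
Proof. by rewrite -(sum_delta_l i0 f); apply: eq_bigr => i _; rewrite mulrC. Qed.

Lemma sum_indicator (p : pred X) : \sum_x ((p x)%:R : F) = #|[set x | p x]|%:R.
Proof.
rewrite -natr_sum; congr _%:R; rewrite cardsE -sum1_card big_mkcond [RHS]big_mkcond /=.
by apply: eq_bigr => x _; rewrite unfold_in; case: (p x).
Qed.

End SumHelpers.

(* Determinant of the 3x3 system governing the eigenvalues mu = z^2 of N' N'^T. *)
Definition signed_gram_cubic (F : comNzRingType) (q mu : F) : F :=
  mu ^+ 3 - (q ^+ 2 + 4 * q + 1) * mu ^+ 2 + (2 * q ^+ 3 + 5 * q ^+ 2 + 2 * q) * mu
  - q ^+ 2 * (q - 1) ^+ 2.

Lemma signed_gram_cubic_sq (F : comNzRingType) (q t : F) :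
  signed_gram_cubic q (t ^+ 2) = - (hl_cubic q t * hl_cubic q (- t)).
Proof. by rewrite /signed_gram_cubic /hl_cubic; ring. Qed.

(* The linear system satisfied by t = x(p0), U = sum over the points of l0 of x,
   and S = sum of x, when N' N'^T x = mu x. *)
Definition reduced_system (F : comNzRingType) (q mu t U S : F) : Prop :=
  [/\ (mu - q - 2) * t + 2 * U - S = 0,
      (2 * q - 2) * t + (mu - q + 2) * U - (q + 1) * S = 0 &
      (2 * q - 2) * t + 2 * U + (mu - q - (q ^+ 2 + q + 1)) * S = 0].

Section ReducedSystem.
Variables (F : fieldType) (q mu : F).

(* Explicit cofactor combinations: a nonzero determinant forces t = U = S = 0. *)
Lemma reduced_system_trivial (t U S : F) :
  signed_gram_cubic q mu != 0 -> reduced_system q mu t U S -> [/\ t = 0, U = 0 & S = 0].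
Proof.
move=> nz [e1 e2 e3].
have cancel (a : F) : signed_gram_cubic q mu * a = 0 -> a = 0.
  by move/eqP; rewrite mulf_eq0 (negPf nz) => /eqP.
have t0 : t = 0.
  apply: cancel; have -> : signed_gram_cubic q mu * t =
    (- q + q ^+ 3 + mu - 3 * mu * q - mu * q ^+ 2 + mu ^+ 2) *
       ((mu - q - 2) * t + 2 * U - S)
    + (4 * q + 2 * q ^+ 2 - 2 * mu) * ((2 * q - 2) * t + (mu - q + 2) * U - (q + 1) * S)
    + (- 3 * q + mu) * ((2 * q - 2) * t + 2 * U + (mu - q - (q ^+ 2 + q + 1)) * S).
    by rewrite /signed_gram_cubic; ring.
  by rewrite e1 e2 e3 !mulr0 !addr0.
have U0 : U = 0.
  apply: cancel; have -> : signed_gram_cubic q mu * U =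
    (- 2 * q + 2 * q ^+ 3 + 2 * mu - 2 * mu * q) * ((mu - q - 2) * t + 2 * U - S)
    + (7 * q + 4 * q ^+ 2 + q ^+ 3 - 3 * mu - 3 * mu * q - mu * q ^+ 2 + mu ^+ 2)
       * ((2 * q - 2) * t + (mu - q + 2) * U - (q + 1) * S)
    + (- 5 * q - q ^+ 2 + mu + mu * q)
       * ((2 * q - 2) * t + 2 * U + (mu - q - (q ^+ 2 + q + 1)) * S).
    by rewrite /signed_gram_cubic; ring.
  by rewrite e1 e2 e3 !mulr0 !addr0.
by split=> //; move: e1; rewrite t0 U0 !mulr0 !add0r => /eqP; rewrite oppr_eq0 => /eqP.
Qed.

Lemma reduced_system_solution :
  signed_gram_cubic q mu = 0 ->
  reduced_system q mu (mu - 3 * q) ((mu - q - 2) * (q + 1) - 2 * q + 2) ((mu - q) ^+ 2 - 4 * q).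
Proof.
move=> root_mu; split; try ring.
by rewrite -root_mu /signed_gram_cubic; ring.
Qed.

End ReducedSystem.

(* The eigen-equation of N' N'^T in abstract form: x0 stands for the point p0
   and u for the indicator of the line l0 through it, among q^2 + q + 1 points. *)
Section SignedEquation.
Variables (F : numFieldType) (X : finType) (x0 : X) (u : X -> F) (q : F).
Hypotheses (u_x0 : u x0 = 1) (sum_u : \sum_i u i = q + 1)
  (sum_u2 : \sum_i u i * u i = q + 1) (card_X : #|X|%:R = q ^+ 2 + q + 1).

Definition profile (a b c : F) (i : X) : F := a + b * (i == x0)%:R + c * u i.

(* N' N'^T x, written in terms of x (see signed_inc_gram). *)
Definition signed_rhs (x : X -> F) (i : X) : F :=
  q * x i + profile (\sum_j x j) (4 * x x0 - 2 * \sum_j u j * x j) (- 2 * x x0) i.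

Lemma sum_profile (a b c : F) :
  \sum_i profile a b c i = a * (q ^+ 2 + q + 1) + b + c * (q + 1).
Proof.
rewrite !big_split /= -!mulr_sumr sumr_const sum_u -card_X mulr_natr.
by rewrite (eq_bigr (fun i => (i == x0)%:R * 1)) ?sum_delta_l ?mulr1 // => i; rewrite mulr1.
Qed.

Lemma sum_u_profile (a b c : F) :
  \sum_i u i * profile a b c i = a * (q + 1) + b + c * (q + 1).
Proof.
rewrite (eq_bigr (fun i => a * u i + b * (u i * (i == x0)%:R) + c * (u i * u i))).
  by rewrite !big_split /= -!mulr_sumr sum_u sum_delta_r u_x0 sum_u2 mulr1.
by move=> i _; rewrite /profile; ring.
Qed.

(* Evaluating mu x = N' N'^T x at x0 and summing it against 1 and u. *)
Lemma signed_rhs_system (mu : F) (x : X -> F) :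
  (forall i, mu * x i = signed_rhs x i) ->
  reduced_system q mu (x x0) (\sum_i u i * x i) (\sum_i x i).
Proof.
rewrite /signed_rhs; set S := \sum_i x i; set U := \sum_i u i * x i; set t := x x0.
move=> eqx.
have E1 : mu * t = q * t + S + (4 * t - 2 * U) - 2 * t.
  by rewrite /t eqx /profile eqxx u_x0 /= -/t; ring.
have E2 : mu * U = q * U + S * (q + 1) + (4 * t - 2 * U) - 2 * t * (q + 1).
  rewrite /U mulr_sumr (eq_bigr (fun i =>
    q * (u i * x i) + u i * profile S (4 * t - 2 * U) (- 2 * t) i)).
    by rewrite big_split /= -mulr_sumr sum_u_profile -/U; ring.
  by move=> i _; rewrite mulrCA eqx -/S -/U -/t; ring.
have E3 : mu * S = q * S + S * (q ^+ 2 + q + 1) + (4 * t - 2 * U) - 2 * t * (q + 1).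
  rewrite /S mulr_sumr (eq_bigr _ (fun i _ => eqx i)) big_split /= -mulr_sumr.
  by rewrite sum_profile -/S; ring.
split.
- by move/eqP: E1; rewrite -subr_eq0 => /eqP <-; ring.
- by move/eqP: E2; rewrite -subr_eq0 => /eqP <-; ring.
- by move/eqP: E3; rewrite -subr_eq0 => /eqP <-; ring.
Qed.

Lemma signed_eigen_trivial (mu : F) (x : X -> F) :
  (forall i, mu * x i = signed_rhs x i) ->
  mu != q -> signed_gram_cubic q mu != 0 -> forall i, x i = 0.
Proof.
move=> eqx mu_q nz i; have [t0 U0 S0] := reduced_system_trivial nz (signed_rhs_system eqx).
move/eqP: (eqx i); rewrite /signed_rhs t0 U0 S0 /profile -subr_eq0.
have -> : mu * x i - (q * x i + (0 + (4 * 0 - 2 * 0) * (i == x0)%:R + - 2 * 0 * u i))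
    = (mu - q) * x i by ring.
by rewrite mulf_eq0 subr_eq0 (negPf mu_q) => /eqP.
Qed.

(* Conversely a root mu of the cubic is an eigenvalue of N' N'^T: x is built
   as a profile from the kernel vector of the reduced system. *)
Lemma signed_eigen_exists (mu : F) : 1 < q -> signed_gram_cubic q mu = 0 ->
  exists2 x : X -> F, (exists i, x i != 0) & forall i, mu * x i = signed_rhs x i.
Proof.
move=> q1 root_mu.
have q0 : q != 0 by rewrite gt_eqF // (lt_trans ltr01).
have mu_q : mu - q != 0.
  rewrite subr_eq0; apply/eqP => mq; move: root_mu; rewrite mq.
  have -> : signed_gram_cubic q q = 4 * q ^+ 3 by rewrite /signed_gram_cubic; ring.
  by apply/eqP; rewrite mulf_neq0 ?expf_neq0 // pnatr_eq0.
set t := mu - 3 * q; set U := (mu - q - 2) * (q + 1) - 2 * q + 2.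
set S := (mu - q) ^+ 2 - 4 * q.
have [e1 e2 e3] := reduced_system_solution root_mu; rewrite -/t -/U -/S in e1 e2 e3.
pose x i := profile S (4 * t - 2 * U) (- 2 * t) i / (mu - q).
have solve (a b k e : F) : e = 0 -> a - (mu - q) * b = k * e -> a / (mu - q) = b.
  by move=> e0; rewrite e0 mulr0 => /eqP; rewrite subr_eq0 => /eqP ->; rewrite mulrC mulKf.
have x_x0 : x x0 = t.
  by apply: (solve _ _ (-1) _ e1); rewrite /profile eqxx u_x0 /=; ring.
have sum_x : \sum_i x i = S.
  rewrite -mulr_suml sum_profile; apply: (solve _ _ (-1) _ e3); ring.
have sum_ux : \sum_i u i * x i = U.
  rewrite (eq_bigr (fun i => u i * profile S (4 * t - 2 * U) (- 2 * t) i / (mu - q))).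
    by rewrite -mulr_suml sum_u_profile; apply: (solve _ _ (-1) _ e2); ring.
  by move=> i _; rewrite mulrA.
exists x; last first.
  move=> i; rewrite /signed_rhs x_x0 sum_x sum_ux.
  by rewrite -[profile _ _ _ i](mulfVK mu_q) -/(x i); ring.
have [t0|t0] := eqVneq t 0; last by exists x0; rewrite x_x0.
have S0 : S != 0.
  have -> : S = 4 * q * (q - 1).
    by move: t0; rewrite /S /t => /eqP; rewrite subr_eq0 => /eqP ->; ring.
  by rewrite !mulf_neq0 // ?pnatr_eq0 // subr_eq0 gt_eqF.
case: (pickP (fun i => x i != 0)) => [i xi | allx]; first by exists i.
by move: S0; rewrite -sum_x big1 ?eqxx // => i _; apply/eqP/negbFE/allx.
Qed.

End SignedEquation.

Lemma plain_eigen_trivial (F : fieldType) (X : finType) (q mu : F) (x : X -> F) :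
  #|X|%:R = q ^+ 2 + q + 1 -> (forall i, mu * x i = q * x i + \sum_j x j) ->
  mu != q -> mu != (q + 1) ^+ 2 -> forall i, x i = 0.
Proof.
move=> card_X eqx mu_q mu_q1; set S := \sum_j x j in eqx.
have S0 : S = 0.
  have : mu * S = q * S + S * (q ^+ 2 + q + 1).
    by rewrite /S mulr_sumr (eq_bigr _ (fun i _ => eqx i)) big_split /= -mulr_sumr
      sumr_const -card_X mulr_natr.
  move/eqP; rewrite -subr_eq0.
  have -> : mu * S - (q * S + S * (q ^+ 2 + q + 1)) = (mu - (q + 1) ^+ 2) * S by ring.
  by rewrite mulf_eq0 subr_eq0 (negPf mu_q1) => /eqP.
move=> i; move/eqP: (eqx i); rewrite S0 addr0 -subr_eq0 -mulrBl.
by rewrite mulf_eq0 subr_eq0 (negPf mu_q) => /eqP.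
Qed.

Lemma bipartite_square (F : comNzRingType) (X Y : finType) (b : X -> Y -> F)
    (x : X -> F) (y : Y -> F) (z : F) :
  (forall i, z * x i = \sum_j b i j * y j) ->
  (forall j, z * y j = \sum_i b i j * x i) ->
  forall i, z ^+ 2 * x i = \sum_i' (\sum_j b i j * b i' j) * x i'.
Proof.
move=> eqx eqy i; rewrite expr2 -mulrA eqx mulr_sumr.
rewrite (eq_bigr (fun j => \sum_i' b i j * b i' j * x i')); last first.
  by move=> j _; rewrite mulrCA eqy mulr_sumr; apply: eq_bigr => i' _; rewrite mulrA.
by rewrite exchange_big /=; apply: eq_bigr => i' _; rewrite mulr_suml.
Qed.

Lemma bipartite_unsquare (F : fieldType) (X Y : finType) (b : X -> Y -> F)
    (x : X -> F) (z : F) :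
  z != 0 -> (forall i, \sum_i' (\sum_j b i j * b i' j) * x i' = z ^+ 2 * x i) ->
  let y j := (\sum_i b i j * x i) / z in
  (forall i, z * x i = \sum_j b i j * y j) /\ (forall j, z * y j = \sum_i b i j * x i).
Proof.
move=> z0 eqx y; split=> [i|j]; last by rewrite /y mulrC mulfVK.
apply: (mulfI z0); rewrite mulrA -expr2 -eqx mulr_sumr.
rewrite (eq_bigr (fun j => \sum_i' b i j * b i' j * x i')); last first.
  move=> j _; rewrite /y mulrCA [z * _]mulrC mulfVK // mulr_sumr.
  by apply: eq_bigr => i' _; rewrite mulrA.
by rewrite exchange_big /=; apply: eq_bigr => i' _; rewrite mulr_suml.
Qed.

Lemma proj_plane_dual (q : nat) (P L : finType) (inc : P -> L -> bool) :
  proj_plane q inc -> proj_plane q (fun l p => inc p l).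
Proof. by case. Qed.

Section ProjectivePlane.
Variables (F : numFieldType) (q : nat) (X Y : finType) (I : X -> Y -> bool).
Hypothesis plane : proj_plane q I.

(* N N^T = qI + J: two points share one line, a point lies on q + 1 lines. *)
Lemma inc_gram (x x' : X) :
  \sum_y ((I x y)%:R * (I x' y)%:R : F) = q%:R * (x' == x)%:R + 1.
Proof.
case: plane => meet _ _ deg.
rewrite (eq_bigr (fun y => (I x y && I x' y)%:R)); last by move=> y _; rewrite -natrM mulnb.
rewrite sum_indicator; have [->|nx] := eqVneq x' x; last by rewrite meet 1?eq_sym ?mulr0 ?add0r.
have -> : [set y | I x y && I x y] = [set y | I x y] by apply/setP => y; rewrite !inE andbb.
by rewrite deg mulr1 -addn1 natrD.
Qed.

Lemma line_size (y : Y) : \sum_x ((I x y)%:R : F) = q%:R + 1.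
Proof. by case: plane => _ _ size_y _; rewrite sum_indicator size_y -addn1 natrD. Qed.

Lemma point_degree (x : X) : \sum_y ((I x y)%:R : F) = q%:R + 1.
Proof. by case: plane => _ _ _ deg_x; rewrite sum_indicator deg_x -addn1 natrD. Qed.

(* A plane of order q has q^2 + q + 1 points (double count the incident pairs
   (x, y) with y through a fixed point x0). *)
Lemma card_points (x0 : X) : (#|X|%:R : F) = q%:R ^+ 2 + q%:R + 1.
Proof.
pose pairs := \sum_x \sum_y ((I x y)%:R * (I x0 y)%:R : F).
have by_gram : pairs = q%:R + #|X|%:R.
  rewrite /pairs (eq_bigr _ (fun x _ => inc_gram x x0)) big_split /= -mulr_sumr sumr_const.
  rewrite (eq_bigr (fun x => (x == x0)%:R * 1)); last by move=> x _; rewrite mulr1 eq_sym.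
  by rewrite sum_delta_l mulr1.
have by_lines : pairs = (q%:R + 1) * (q%:R + 1).
  rewrite /pairs exchange_big /= (eq_bigr (fun y => (I x0 y)%:R * (q%:R + 1))).
    by rewrite -mulr_suml point_degree.
  by move=> y _; rewrite -mulr_suml line_size mulrC.
by apply: (@addrI _ q%:R); rewrite -by_gram by_lines; ring.
Qed.

(* N': the incidence matrix with the entry (x0, y0) negated (when I x0 y0). *)
Definition signed_inc (x0 : X) (y0 : Y) (i : X) (j : Y) : F :=
  (I i j)%:R - 2 * (i == x0)%:R * (j == y0)%:R.

Lemma signed_inc_gram (x0 : X) (y0 : Y) (x : X -> F) (i : X) :
  \sum_i' (\sum_j signed_inc x0 y0 i j * signed_inc x0 y0 i' j) * x i' =
  signed_rhs x0 (fun i => (I i y0)%:R) q%:R x i.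
Proof.
set u := fun i => ((I i y0)%:R : F).
have gram i1 i' : \sum_j signed_inc x0 y0 i1 j * signed_inc x0 y0 i' j =
    q%:R * (i' == i1)%:R + 1 - 2 * (i1 == x0)%:R * u i' - 2 * (i' == x0)%:R * u i1
    + 4 * (i1 == x0)%:R * (i' == x0)%:R.
  rewrite (eq_bigr (fun j => (I i1 j)%:R * (I i' j)%:R
     + (- 2 * (i1 == x0)%:R) * ((I i' j)%:R * (j == y0)%:R)
     + (- 2 * (i' == x0)%:R) * ((I i1 j)%:R * (j == y0)%:R)
     + (4 * (i1 == x0)%:R * (i' == x0)%:R) * ((j == y0)%:R * (j == y0)%:R))); last first.
    by move=> j _; rewrite /signed_inc; ring.
  by rewrite !big_split /= -!mulr_sumr !sum_delta_r inc_gram eqxx /u /=; ring.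
rewrite (eq_bigr (fun i' => q%:R * (x i' * (i' == i)%:R) + x i'
   + (- 2 * (i == x0)%:R) * (u i' * x i') + (- 2 * u i) * (x i' * (i' == x0)%:R)
   + (4 * (i == x0)%:R) * (x i' * (i' == x0)%:R))); last first.
  by move=> i' _; rewrite gram; ring.
by rewrite !big_split /= -!mulr_sumr !sum_delta_r /signed_rhs /profile /u; ring.
Qed.

Lemma inc_eigen_sq (x : X -> F) (y : Y -> F) (z : F) :
  (forall i, z * x i = \sum_j (I i j)%:R * y j) ->
  (forall j, z * y j = \sum_i (I i j)%:R * x i) ->
  (exists i, x i != 0) -> z ^+ 2 = q%:R \/ z ^+ 2 = (q%:R + 1) ^+ 2.
Proof.
move=> eqx eqy [i1 xi1].
have eqx2 i : z ^+ 2 * x i = q%:R * x i + \sum_j x j.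
  rewrite (bipartite_square eqx eqy).
  rewrite (eq_bigr (fun i' => q%:R * (x i' * (i' == i)%:R) + x i')); last first.
    by move=> i' _; rewrite inc_gram; ring.
  by rewrite big_split /= -mulr_sumr sum_delta_r.
have [|z_q] := eqVneq (z ^+ 2) q%:R; first by left.
have [|z_q1] := eqVneq (z ^+ 2) ((q%:R + 1) ^+ 2); first by right.
by move: xi1; rewrite (plain_eigen_trivial (card_points i1) eqx2 z_q z_q1) eqxx.
Qed.

Section SignedLine.
Variables (x0 : X) (y0 : Y).
Hypothesis x0y0 : I x0 y0.

Let u i : F := (I i y0)%:R.
Let u_x0 : u x0 = 1. Proof. by rewrite /u x0y0. Qed.
Let sum_u : \sum_i u i = q%:R + 1. Proof. exact: line_size. Qed.
Let sum_u2 : \sum_i u i * u i = q%:R + 1.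
Proof. by rewrite -sum_u; apply: eq_bigr => i _; rewrite /u -natrM mulnb andbb. Qed.

Lemma signed_inc_eigen_sq (x : X -> F) (y : Y -> F) (z : F) :
  (forall i, z * x i = \sum_j signed_inc x0 y0 i j * y j) ->
  (forall j, z * y j = \sum_i signed_inc x0 y0 i j * x i) ->
  (exists i, x i != 0) -> z ^+ 2 = q%:R \/ signed_gram_cubic q%:R (z ^+ 2) = 0.
Proof.
move=> eqx eqy [i1 xi1].
have eqx2 i : z ^+ 2 * x i = signed_rhs x0 u q%:R x i.
  by rewrite (bipartite_square eqx eqy) signed_inc_gram.
have [|z_q] := eqVneq (z ^+ 2) q%:R; first by left.
have [|nz] := eqVneq (signed_gram_cubic q%:R (z ^+ 2)) 0; first by right.
by move: xi1; rewrite (signed_eigen_trivial u_x0 sum_u sum_u2 (card_points x0) eqx2 z_q nz) eqxx.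
Qed.

Lemma signed_inc_eigen_exists (z : F) :
  (1 < q)%N -> z != 0 -> signed_gram_cubic q%:R (z ^+ 2) = 0 ->
  exists (x : X -> F) (y : Y -> F), [/\ exists i, x i != 0,
    forall i, z * x i = \sum_j signed_inc x0 y0 i j * y j &
    forall j, z * y j = \sum_i signed_inc x0 y0 i j * x i].
Proof.
move=> q1 z0 root_z; have q1F : 1 < (q%:R : F) by rewrite ltr1n.
have [x xn0 eqx] := signed_eigen_exists u_x0 sum_u sum_u2 (card_points x0) q1F root_z.
have gram_x i : \sum_i' (\sum_j signed_inc x0 y0 i j * signed_inc x0 y0 i' j) * x i' =
    z ^+ 2 * x i by rewrite signed_inc_gram eqx.
have [eqx' eqy] := bipartite_unsquare z0 gram_x.
by exists x, (fun j => (\sum_i signed_inc x0 y0 i j * x i) / z).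
Qed.

End SignedLine.
End ProjectivePlane.

Lemma adj_eigen_fun (V : finType) (e : rel V) (v : 'rV[algC]_#|V|) (z : algC) :
  v *m adj_mx e = z *: v <->
  (forall y, \sum_x v 0 (enum_rank x) * (e x y)%:R = z * v 0 (enum_rank y)).
Proof.
have sumE y : (v *m adj_mx e) 0 (enum_rank y) = \sum_x v 0 (enum_rank x) * (e x y)%:R.
  rewrite mxE (reindex enum_rank) /=; last by apply: onW_bij; apply: enum_rank_bij.
  by apply: eq_bigr => x _; rewrite !mxE !enum_rankK.
split=> [hv y | hv]; first by rewrite -sumE hv mxE.
by apply/rowP => j; rewrite -[j]enum_valK sumE hv mxE.
Qed.

(* Abstract bookkeeping for splitting a two-copy eigen-equation into the sum
   and difference of the copies; w are the edge weights between copies. *)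
Lemma split_sym_anti (J : finType) (w : J -> bool -> bool -> algC) (a b : J -> algC)
    (g : bool -> J -> algC) :
  (forall j c, w j true c + w j false c = a j) ->
  (forall j c, w j true c - w j false c = (if c then 1 else -1) * b j) ->
  let S c := \sum_j (g true j * w j c true + g false j * w j c false) in
  S true + S false = \sum_j a j * (g true j + g false j) /\
  S true - S false = \sum_j b j * (g true j - g false j).
Proof.
move=> wsum wdiff S; rewrite /S -big_split -sumrB /=; split; apply: eq_bigr => j _.
  by rewrite mulrDr -{1}(wsum j true) -(wsum j false); ring.
have := wdiff j true; have := wdiff j false; rewrite mulN1r mul1r => dfalse dtrue.
by rewrite mulrBr -{1}dtrue -[b j]opprK -dfalse; ring.
Qed.

Lemma sum_diff_eq0 (a b : algC) : a + b = 0 -> a - b = 0 -> a = 0 /\ b = 0.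
Proof.
move=> s d; have a0 : a = 0.
  have : 2 * a = (a + b) + (a - b) by ring.
  by rewrite s d addr0 => /eqP; rewrite mulf_eq0 pnatr_eq0 => /eqP.
by split=> //; move: s; rewrite a0 add0r.
Qed.

Section HatGraph.
Variables (P L : finType) (inc : P -> L -> bool) (p0 : P) (l0 : L).
Hypothesis p0l0 : inc p0 l0.

Local Notation e := (hatG inc p0 l0).
Local Notation sinc := (signed_inc algC inc p0 l0).

Definition hat_weight (p : P) (l : L) (c c' : bool) : algC :=
  (if (p == p0) && (l == l0) then c != c' else (c == c') && inc p l)%:R.

Lemma hatG_sym : symmetric e.
Proof. by case=> c [p|l] [c' [p'|l']]. Qed.

Lemma hat_weight_sym p l c c' : hat_weight p l c c' = hat_weight p l c' c.
Proof. by rewrite /hat_weight eq_sym [c' == c]eq_sym. Qed.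

Lemma hat_weight_sum p l c : hat_weight p l true c + hat_weight p l false c = (inc p l)%:R.
Proof.
rewrite /hat_weight; have [/andP[/eqP-> /eqP->]|_] := boolP ((p == p0) && (l == l0)).
  by rewrite p0l0; case: c; rewrite /= ?add0r ?addr0.
by case: c; case: (inc p l); rewrite /= ?add0r ?addr0.
Qed.

Lemma hat_weight_diff p l c :
  hat_weight p l true c - hat_weight p l false c = (if c then 1 else -1) * sinc p l.
Proof.
rewrite /hat_weight /signed_inc -mulrA -natrM mulnb.
have [/andP[/eqP-> /eqP->]|_] := boolP ((p == p0) && (l == l0)).
  by rewrite p0l0; case: c => /=; ring.
by case: c; case: (inc p l) => /=; ring.
Qed.

Lemma sum_hatV (F : hatV P L -> algC) :
  \sum_x F x = \sum_c (\sum_p F (c, inl p) + \sum_l F (c, inr l)).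
Proof.
rewrite (eq_bigr (fun c => \sum_(w : P + L) F (c, w))); last first.
  by move=> c _; rewrite big_sumType.
by rewrite pair_big /=; apply: eq_bigr => -[].
Qed.

Lemma hat_nbr_point (f : hatV P L -> algC) c p :
  \sum_w f w * (e w (c, inl p))%:R =
  \sum_l (f (true, inr l) * hat_weight p l c true + f (false, inr l) * hat_weight p l c false).
Proof.
have no_pp c' : \sum_p' f (c', inl p') * 0 = 0 by apply: big1 => p' _; rewrite mulr0.
by rewrite sum_hatV big_bool /= !no_pp !add0r big_split.
Qed.

Lemma hat_nbr_line (f : hatV P L -> algC) c l :
  \sum_w f w * (e w (c, inr l))%:R =
  \sum_p (f (true, inl p) * hat_weight p l c true + f (false, inl p) * hat_weight p l c false).
Proof.
have no_ll c' : \sum_l' f (c', inr l') * 0 = 0 by apply: big1 => l' _; rewrite mulr0.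
rewrite sum_hatV big_bool /= !no_ll !addr0 -big_split /=.
by apply: eq_bigr => p _; rewrite ![hat_weight p l c _]hat_weight_sym.
Qed.

Lemma hat_eigen_split (f : hatV P L -> algC) (z : algC) :
  (forall y, \sum_x f x * (e x y)%:R = z * f y) ->
  [/\ forall p, z * (f (true, inl p) + f (false, inl p)) =
                \sum_l (inc p l)%:R * (f (true, inr l) + f (false, inr l)),
      forall l, z * (f (true, inr l) + f (false, inr l)) =
                \sum_p (inc p l)%:R * (f (true, inl p) + f (false, inl p)),
      forall p, z * (f (true, inl p) - f (false, inl p)) =
                \sum_l sinc p l * (f (true, inr l) - f (false, inr l)) &
      forall l, z * (f (true, inr l) - f (false, inr l)) =
                \sum_p sinc p l * (f (true, inl p) - f (false, inl p))].
Proof.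
move=> eigen_f.
have pts p := split_sym_anti (fun c l => f (c, inr l)) (hat_weight_sum p) (hat_weight_diff p).
have lns l := @split_sym_anti _ (hat_weight^~ l) _ _ (fun c p => f (c, inl p))
  (hat_weight_sum^~ l) (hat_weight_diff^~ l).
split=> [p|l|p|l].
- by case: (pts p) => /= <- _; rewrite -!hat_nbr_point !eigen_f mulrDr.
- by case: (lns l) => /= <- _; rewrite -!hat_nbr_line !eigen_f mulrDr.
- by case: (pts p) => /= _ <-; rewrite -!hat_nbr_point !eigen_f mulrBr.
- by case: (lns l) => /= _ <-; rewrite -!hat_nbr_line !eigen_f mulrBr.
Qed.

Definition antisym_lift (x : P -> algC) (y : L -> algC) (v : hatV P L) : algC :=
  match v with
  | (c, inl p) => if c then x p else - x p
  | (c, inr l) => if c then y l else - y l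
  end.

Lemma hat_antisym_eigen (x : P -> algC) (y : L -> algC) (z : algC) :
  (forall p, z * x p = \sum_l sinc p l * y l) ->
  (forall l, z * y l = \sum_p sinc p l * x p) ->
  forall v, \sum_w antisym_lift x y w * (e w v)%:R = z * antisym_lift x y v.
Proof.
move=> eqx eqy [c [p|l]]; rewrite ?hat_nbr_point ?hat_nbr_line /=.
- rewrite (eq_bigr (fun l => (if c then 1 else -1) * (sinc p l * y l))).
    by rewrite -mulr_sumr -eqx; case: c; ring.
  by move=> l _; rewrite [RHS]mulrA -hat_weight_diff !(hat_weight_sym p l c); ring.
- rewrite (eq_bigr (fun p => (if c then 1 else -1) * (sinc p l * x p))).
    by rewrite -mulr_sumr -eqy; case: c; ring.
  by move=> p _; rewrite [RHS]mulrA -hat_weight_diff !(hat_weight_sym p l c); ring.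
Qed.

Lemma signed_inc_dual (j : L) (i : P) :
  signed_inc algC (fun l p => inc p l) l0 p0 j i = sinc i j.
Proof. by rewrite /signed_inc mulrAC. Qed.

(* Every eigenvalue z of G^ has z^2 = q, z^2 = (q+1)^2, or z^2 a root of the
   cubic: apply the eigenvalue lemmas of the plane (or of its dual) to the first
   nonzero part among f+ and f- on points and lines. *)
Lemma hat_eigenvalue_cases (q : nat) (z : algC) : proj_plane q inc ->
  eigenvalue (adj_mx e) z ->
  [\/ z ^+ 2 = q%:R, z ^+ 2 = (q%:R + 1) ^+ 2 | signed_gram_cubic q%:R (z ^+ 2) = 0].
Proof.
move=> plane /eigenvalueP [v /adj_eigen_fun eigen_v v0].
pose f w := v 0 (enum_rank w).
pose xs p := f (true, inl p) + f (false, inl p); pose ys l := f (true, inr l) + f (false, inr l).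
pose xa p := f (true, inl p) - f (false, inl p); pose ya l := f (true, inr l) - f (false, inr l).
have [eq_xs eq_ys eq_xa eq_ya] := hat_eigen_split eigen_v.
have dual := proj_plane_dual plane.
case: (pickP (fun p => xs p != 0)) => [p xp | xs0].
  by case: (inc_eigen_sq plane eq_xs eq_ys (ex_intro _ p xp)) => ->;
    [constructor 1 | constructor 2].
case: (pickP (fun l => ys l != 0)) => [l yl | ys0].
  by case: (inc_eigen_sq (I := fun l p => inc p l) dual eq_ys eq_xs (ex_intro _ l yl)) => ->;
    [constructor 1 | constructor 2].
case: (pickP (fun p => xa p != 0)) => [p xp | xa0].
  by case: (signed_inc_eigen_sq plane p0l0 eq_xa eq_ya (ex_intro _ p xp)) => ->;
    [constructor 1 | constructor 3].
case: (pickP (fun l => ya l != 0)) => [l yl | ya0].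
  have eq_ya' l' : z * ya l' = \sum_p signed_inc algC (fun l p => inc p l) l0 p0 l' p * xa p.
    by rewrite eq_ya; apply: eq_bigr => p _; rewrite signed_inc_dual.
  have eq_xa' p : z * xa p = \sum_l signed_inc algC (fun l p => inc p l) l0 p0 l p * ya l.
    by rewrite eq_xa; apply: eq_bigr => l' _; rewrite signed_inc_dual.
  by case: (signed_inc_eigen_sq dual p0l0 eq_ya' eq_xa' (ex_intro _ l yl)) => ->;
    [constructor 1 | constructor 3].
case/negP: v0; apply/eqP/rowP => i; rewrite mxE -[i]enum_valK -/(f _).
case: (enum_val i) => c [p|l].
  by have [? ?] := sum_diff_eq0 (eqP (negbFE (xs0 p))) (eqP (negbFE (xa0 p))); case: c.
by have [? ?] := sum_diff_eq0 (eqP (negbFE (ys0 l))) (eqP (negbFE (ya0 l))); case: c.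
Qed.

Lemma hat_eigenvalue_of_cubic (q : nat) (z : algC) : proj_plane q inc -> (1 < q)%N ->
  z != 0 -> signed_gram_cubic q%:R (z ^+ 2) = 0 -> eigenvalue (adj_mx e) z.
Proof.
move=> plane q1 z0 root_z.
have [x [y [[p xp] eqx eqy]]] := signed_inc_eigen_exists plane p0l0 q1 z0 root_z.
apply/eigenvalueP; exists (\row_i antisym_lift x y (enum_val i)).
  apply/adj_eigen_fun => w; rewrite mxE enum_rankK -hat_antisym_eigen //.
  by apply: eq_bigr => w' _; rewrite mxE enum_rankK.
by apply/negP => /eqP/rowP/(_ (enum_rank (true, inl p))); rewrite !mxE enum_rankK; apply/eqP.
Qed.

Lemma hat_adj_hermitian i j : adj_mx e i j = (adj_mx e j i)^*.
Proof. by rewrite !mxE hatG_sym conjC_nat. Qed.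

Lemma hat_adj_bipartite (i j : 'I_#|{: hatV P L}|) :
  is_inl (enum_val i).2 = is_inl (enum_val j).2 -> adj_mx e i j = 0.
Proof. by rewrite !mxE; case: (enum_val i) => c [p|l]; case: (enum_val j) => c' [p'|l']. Qed.

End HatGraph.

Lemma hat_eigenvalue_lower_bound (q : nat) (P L : finType) (inc : P -> L -> bool)
    (p0 : P) (l0 : L) (r z : algC) :
  proj_plane q inc -> inc p0 l0 -> 0 <= r -> r ^+ 2 < q%:R ->
  {in Creal, forall t, hl_cubic q%:R t = 0 -> r <= `|t|} ->
  eigenvalue (adj_mx (hatG inc p0 l0)) z -> r <= `|z|.
Proof.
move=> plane p0l0 r0 rq rmin eig_z.
have z_real : z \is Creal := hermitian_eigenvalue_real (@hat_adj_hermitian _ _ _ _ _) eig_z.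
have large : q%:R <= `|z| ^+ 2 -> r <= `|z|.
  move=> qz; rewrite ltW // -(ltr_pXn2r (_ : 0 < 2)%N) ?nnegrE //.
  exact: lt_le_trans rq qz.
rewrite real_normK // in large.
case: (hat_eigenvalue_cases p0l0 plane eig_z) => [zq | zq | ].
- by apply: large; rewrite zq.
- apply: large; rewrite zq natr1 -natrX ler_nat expnS expn1.
  exact: leq_trans (leqnSn q) (leq_pmulr _ _).
- rewrite signed_gram_cubic_sq => /eqP; rewrite oppr_eq0 mulf_eq0 => /orP[] /eqP root_z.
    exact: rmin.
  by rewrite -normrN; apply: rmin; rewrite ?rpredN.
Qed.

Lemma hl_cubic_polyE (q : nat) (t : algC) :
  ('X^3 + (1 - q%:R) *: 'X^2 - (3 * q)%:R *: 'X + ((q ^ 2 - q)%N)%:R%:P).[t] =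
  hl_cubic q%:R t.
Proof.
have q_sq : (q <= q ^ 2)%N by case: q => // n; rewrite expnS expn1 leq_pmulr.
have -> : ((q ^ 2 - q)%N%:R : algC) = q%:R ^+ 2 - q%:R by rewrite natrB // natrX.
by rewrite !hornerE natrM /hl_cubic /=; ring.
Qed.

Unset Implicit Arguments.
Theorem mainTheorem8 (q : nat)
  (Hq : exists p k : nat, [/\ prime p, (0 < k)%N & q = (p ^ k)%N])
  (P L : finType) (inc : P -> L -> bool) (HP : proj_plane q inc)
  (p0 : P) (l0 : L) (He : inc p0 l0) :
  let R := HL_index (adj_mx (hatG inc p0 l0)) in
  [/\ sqrtC (q%:R - 1) - 1 < R, R < sqrtC q%:R - 1 &
      root ('X^3 + (1 - q%:R) *: 'X^2 - (3 * q)%:R *: 'X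
            + ((q ^ 2 - q)%N)%:R%:P : {poly algC}) R].
Proof.
have q1 : (1 < q)%N.
  by case: Hq => p [k [pp k0 ->]]; rewrite -[1%N](expn0 p) ltn_exp2l // prime_gt1.
have [r [r0 lo hi root_r rmin]] := hl_cubic_small_rootC q1.
have rq : r ^+ 2 < q%:R.
  have r_lt : r < sqrtC q%:R by apply: lt_le_trans hi _; rewrite gerBl.
  by rewrite -(sqrtCK q%:R) ltr_pXn2r // nnegrE ?sqrtC_ge0 ?ler0n // ltW.
have cubic_r : signed_gram_cubic q%:R (r ^+ 2) = 0.
  by rewrite signed_gram_cubic_sq root_r mul0r oppr0.
have r_neq0 : r != 0 := lt0r_neq0 r0.
have eig_r := hat_eigenvalue_of_cubic He HP q1 r_neq0 cubic_r.
have HL : HL_index (adj_mx (hatG inc p0 l0)) = r.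
  apply: HL_index_symmetric; rewrite ?mem_eigenvalues //.
  - move=> z; rewrite mem_eigenvalues.
    exact: hermitian_eigenvalue_real (@hat_adj_hermitian _ _ _ _ _).
  - exact: eigenvalues_bipartite (@hat_adj_bipartite _ _ _ _ _).
  - by move=> z; rewrite mem_eigenvalues; apply: hat_eigenvalue_lower_bound (ltW r0) rq rmin.
by move=> R; rewrite /R HL; split=> //; rewrite /root hl_cubic_polyE root_r.
Qed.
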